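(* Let $t\in\mathbb{C}^\times$ with $t\neq q^{-2k}$ for all integers $k\ge0$. Then the map $T\mapsto\big(T(1),T(Z),\dots,T(Z^{n-1})\big)$ is a linear isomorphism from the space of $g_t$-twisted traces on $\mathcal{A}_+$ onto $\mathbb{C}^n$.
   Context: Let $q\in\mathbb{C}$ with $0<|q|<1$, $P\in\mathbb{C}[z]$ of degree $n\ge1$. $\mathcal{A}_P$ is generated by $u,v,Z,Z^{-1}$ with relations $ZZ^{-1}=Z^{-1}Z=1$, $ZuZ^{-1}=q^2u$, $ZvZ^{-1}=q^{-2}v$, $uv=P(q^{-1}Z)$, $vu=P(qZ)$, and $\mathcal{A}_+$ is its subalgebra generated by $u,v,Z$. $g_t$ is the automorphism $u\mapsto tu$, $v\mapsto t^{-1}v$, $Z\mapsto Z$ (it preserves $\mathcal{A}_+$). A $g_t$-twisted trace on $\mathcal{A}_+$ is a linear $T\colon\mathcal{A}_+\to\mathbb{C}$ with $T(ab)=T(b\,g_t(a))$ for all $a,b\in\mathcal{A}_+$. *)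

From HB Require Import structures.
From mathcomp Require Import all_boot all_order all_algebra.
From mathcomp Require Import complex.
From mathcomp Require Import reals Rstruct.
Set Implicit Arguments. Unset Strict Implicit. Unset Printing Implicit Defensive.
Import Order.TTheory GRing.Theory Num.Theory.
Local Open Scope ring_scope.

Notation CC := (complex Rdefinitions.R).

Inductive gen := gu | gv | gZ.
Definition gen_eqb (a b : gen) : bool :=
  match a, b with gu, gu | gv, gv | gZ, gZ => true | _, _ => false end.
Lemma gen_eqP : Equality.axiom gen_eqb.
Proof. by case; case; constructor. Qed.
HB.instance Definition _ := hasDecEq.Build gen gen_eqP.

Definition word3 := seq gen.
(* Words in the free algebra on u, v, Z, Z^{-1}: letter [Some g] is the
   generator g, letter [None] is the formal generator Z^{-1}. *)
Definition word4 := seq (option gen).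

(* Finite formal linear combinations (elements of the free algebras). *)
Definition comb3 := seq (CC * word3).
Definition comb4 := seq (CC * word4).

Definition embw (w : word3) : word4 := map Some w.

Definition Pscaled (P : {poly CC}) (c : CC) : comb4 :=
  [seq (P`_i * c ^+ i, embw (nseq i gZ)) | i <- iota 0 (size P)].

(* The defining relations of A_P, as elements r of the free algebra on
   u, v, Z, Z^{-1} (the relation being r = 0). *)
Definition relations (q : CC) (P : {poly CC}) : seq comb4 :=
  [:: [:: (1, [:: Some gZ; None]); (-1, [::])];
      [:: (1, [:: None; Some gZ]); (-1, [::])];
      [:: (1, [:: Some gZ; Some gu; None]); (- q ^+ 2, [:: Some gu])];
      [:: (1, [:: Some gZ; Some gv; None]); (- q ^- 2, [:: Some gv])];
      (1, [:: Some gu; Some gv]) :: [seq (- x.1, x.2) | x <- Pscaled P q^-1]; (* uv = P(q^-1 Z) *)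
      (1, [:: Some gv; Some gu]) :: [seq (- x.1, x.2) | x <- Pscaled P q]]. (* vu = P(q Z) *)

(* An element of the two-sided ideal generated by the relations is a finite
   sum  sum_k c_k * w1_k * r_{j_k} * w2_k ; [ideal_expand] expands it. *)
Definition ideal_expand (q : CC) (P : {poly CC})
  (s : seq (CC * (word4 * nat * word4))) : comb4 :=
  flatten [seq [seq (x.1 * y.1, x.2.1.1 ++ y.2 ++ x.2.2)
               | y <- nth [::] (relations q P) x.2.1.2] | x <- s].

Definition coef4 (p : comb4) (w : word4) : CC :=
  \sum_(x <- p | x.2 == w) x.1.

(* A word4 lies in the subalgebra generated by u, v, Z iff it has no Z^{-1}. *)
Definition Tbar (T : word3 -> CC) (w : word4) : CC :=
  if None \in w then 0 else T (pmap id w).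

(* A linear functional on the free algebra F3 = C<u,v,Z> is the same as a
   function on words.  It descends to A_+ (the subalgebra of A_P generated by
   u, v, Z, i.e. the image of F3 in A_P) iff it vanishes on the kernel of
   F3 -> A_P, i.e. on every element of the ideal of relations (in the free
   algebra on u, v, Z, Z^{-1}) that involves no Z^{-1}. *)
Definition descends (q : CC) (P : {poly CC}) (T : word3 -> CC) : Prop :=
  forall s, (forall w : word4, None \in w -> coef4 (ideal_expand q P s) w = 0) ->
    \sum_(x <- ideal_expand q P s) x.1 * Tbar T x.2 = 0.

Definition evalT (T : word3 -> CC) (p : comb3) : CC := \sum_(x <- p) x.1 * T x.2.

Definition mulc (a b : comb3) : comb3 :=
  [seq (x.1 * y.1, x.2 ++ y.2) | x <- a, y <- b].

Definition wdeg (w : word3) : int := (count_mem gu w)%:Z - (count_mem gv w)%:Z.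
Definition gtw (t : CC) (a : comb3) : comb3 := [seq (x.1 * t ^ wdeg x.2, x.2) | x <- a].

Definition twisted_trace (q : CC) (P : {poly CC}) (t : CC) (T : word3 -> CC) : Prop :=
  descends q P T /\
  forall a b : comb3, evalT T (mulc a b) = evalT T (mulc b (gtw t a)).

(* The relations give A_P the normal forms Z^m u^d, Z^m v^d, and a weight-zero
   linear form on A_+ is determined by its moments tau m = T(Z^m).  Realising
   A_P by its left regular action on normal forms (dually, on linear forms),
   every tau yields a form vanishing on the relations.  Since left and right
   multiplications commute, the twisted trace identity reduces to the single
   family T(u v Z^m) = t T(v Z^m u), a linear recurrence of order n in tau whose
   leading coefficient P_n (q^(-2m-n) - t q^n) is nonzero because t is not a
   power q^(-2k); so the first n moments can be prescribed freely.
   Conversely every twisted trace satisfies the same recurrence, and its value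
   on any word is reduced to moments by moving Z to the right, replacing uv and
   vu by polynomials in Z, and noting that u^k Z^m and v^k Z^m (k > 0) have
   trace 0 because t <> 1 and |q| < 1. *)

From HB Require Import structures.
From mathcomp Require Import all_boot all_order all_algebra.
From mathcomp Require Import complex.
From mathcomp Require Import reals Rstruct.
From Stdlib Require Import FunctionalExtensionality.
From mathcomp Require Import ring zify.
Import Order.TTheory GRing.Theory Num.Theory.
Local Open Scope ring_scope.

Set Implicit Arguments. Unset Strict Implicit. Unset Printing Implicit Defensive.

Definition ldeg (g : option gen) : int :=
  match g with Some gu => 1 | Some gv => -1 | _ => 0 end.
Definition deg4 (w : word4) : int := \sum_(g <- w) ldeg g.

Lemma deg4_nil : deg4 [::] = 0.
Proof. by rewrite /deg4 big_nil. Qed.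

Lemma deg4_cons g w : deg4 (g :: w) = ldeg g + deg4 w.
Proof. by rewrite /deg4 big_cons. Qed.

Lemma deg4_cat w1 w2 : deg4 (w1 ++ w2) = deg4 w1 + deg4 w2.
Proof. by rewrite /deg4 big_cat. Qed.

Lemma deg4_embw (w : word3) : deg4 (embw w) = wdeg w.
Proof.
elim: w => [|g w IH] /=; first by rewrite deg4_nil.
by rewrite deg4_cons IH /wdeg; case: g => /=; lia.
Qed.

Lemma wdeg_cons g (w : word3) : wdeg (g :: w) = ldeg (Some g) + wdeg w.
Proof. by rewrite -!deg4_embw /= deg4_cons. Qed.

Section DualLeftAction.
Variables (q : CC) (P : {poly CC}).

Definition actP (c : CC) (l : int -> CC) (m : int) : CC :=
  \sum_(i <- iota 0 (size P)) P`_i * c ^+ i * l (m + i%:Z).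

(* A map [l : int -> CC] encodes a linear form on the degree-[d] part of
   A_P by its values [l m] at the normal forms [Z^m u^d] (d >= 0) and
   [Z^m v^-d] (d < 0).  [dlmul_letter g d l] is that form precomposed with
   left multiplication by the letter [g]; e.g. for d < 0 the case of [u]
   comes from  u Z^m v^k = q^(-2m) Z^m P(q^-1 Z) v^(k-1). *)
Definition dlmul_letter (g : option gen) (d : int) (l : int -> CC) : int -> CC :=
  match g with
  | Some gZ => fun m => l (m + 1)
  | None => fun m => l (m - 1)
  | Some gu => fun m => q ^ (-2 * m) * (if d < 0 then actP q^-1 l m else l m)
  | Some gv => fun m => q ^ (2 * m) * (if 0 < d then actP q l m else l m)
  end.

Fixpoint dlmul (w : word4) (d : int) (l : int -> CC) : int -> CC :=
  if w is g :: w' then dlmul w' d (dlmul_letter g (deg4 w' + d) l) else l.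

Lemma dlmul_cat w1 w2 d l :
  dlmul (w1 ++ w2) d l = dlmul w2 d (dlmul w1 (deg4 w2 + d) l).
Proof. by elim: w1 l => [|g w1 IH] l //=; rewrite IH deg4_cat addrA. Qed.

Lemma dlmul_Zn i d l m : dlmul (embw (nseq i gZ)) d l m = l (m + i%:Z).
Proof.
elim: i l m => [|i IH] l m /=; first by rewrite addr0.
by rewrite IH addrAC -addrA -intS.
Qed.

Lemma actP_lin c a l1 l2 m :
  actP c (fun j => a * l1 j + l2 j) m = a * actP c l1 m + actP c l2 m.
Proof. by rewrite /actP mulr_sumr -big_split /=; apply: eq_bigr => i _; ring. Qed.

Lemma dlmul_letter_lin g d a l1 l2 :
  dlmul_letter g d (fun j => a * l1 j + l2 j) =
  (fun j => a * dlmul_letter g d l1 j + dlmul_letter g d l2 j).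
Proof.
apply: functional_extensionality => m.
by case: g => [[]|] /=; try case: ifP => _; rewrite ?actP_lin; ring.
Qed.

Lemma dlmul_lin w d a l1 l2 :
  dlmul w d (fun j => a * l1 j + l2 j) =
  (fun j => a * dlmul w d l1 j + dlmul w d l2 j).
Proof. by elim: w l1 l2 => [|g w IH] l1 l2 //=; rewrite dlmul_letter_lin IH. Qed.

Lemma dlmul0 w d : dlmul w d (fun _ => 0) = (fun _ => 0).
Proof.
have E : (fun _ : int => 0 : CC) = (fun j => -1 * (fun _ => 0) j + (fun _ => 0) j).
  by apply: functional_extensionality => j; rewrite mulr0 addr0.
by rewrite [in LHS]E dlmul_lin; apply: functional_extensionality => j; rewrite mulN1r addNr.
Qed.

Lemma dlmulZ w d c l :
  dlmul w d (fun j => c * l j) = (fun j => c * dlmul w d l j).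
Proof.
have E : (fun j => c * l j) = (fun j => c * l j + (fun _ => 0) j).
  by apply: functional_extensionality => j; rewrite addr0.
by rewrite E dlmul_lin dlmul0; apply: functional_extensionality => j; rewrite addr0.
Qed.

Lemma dlmul_sum (I : Type) w d (r : seq I) (a : I -> CC) (L : I -> int -> CC) :
  dlmul w d (fun m => \sum_(i <- r) a i * L i m) =
  (fun m => \sum_(i <- r) a i * dlmul w d (L i) m).
Proof.
elim: r => [|i r IH].
  have -> : (fun m => \sum_(i <- [::]) a i * L i m) = (fun _ => 0).
    by apply: functional_extensionality => m; rewrite big_nil.
  by rewrite dlmul0; apply: functional_extensionality => m; rewrite big_nil.
have -> : (fun m => \sum_(j <- i :: r) a j * L j m) =
          (fun m => a i * L i m + \sum_(j <- r) a j * L j m).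
  by apply: functional_extensionality => m; rewrite big_cons.
by rewrite dlmul_lin IH; apply: functional_extensionality => m; rewrite big_cons.
Qed.

(* The linear form with T(Z^m) = tau m on degree 0 and T = 0 on the other
   degrees, evaluated through the normal form of [w]. *)
Definition trace_form (tau : int -> CC) (w : word4) : CC :=
  if deg4 w == 0 then dlmul w 0 tau 0 else 0.

Lemma trace_form_rel tau (r : comb4) D a b :
  (forall y, y \in r -> deg4 y.2 = D) ->
  (forall e l m, \sum_(y <- r) y.1 * dlmul y.2 e l m = 0) ->
  \sum_(y <- r) y.1 * trace_form tau (a ++ y.2 ++ b) = 0.
Proof.
move=> hD hr; rewrite big_seq.
under eq_bigr => y yr do
  rewrite /trace_form !deg4_cat (hD _ yr) 2!dlmul_cat deg4_cat (hD _ yr).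
rewrite -big_seq; case: eqP => _; last by rewrite big1 // => y _; rewrite mulr0.
have := dlmul_sum b 0 r (fun y => y.1)
  (fun y => dlmul y.2 (deg4 b + 0) (dlmul a (D + deg4 b + 0) tau)).
move/(congr1 (fun f => f 0)) => /= <-.
rewrite (_ : (fun m => _) = fun _ => 0) ?dlmul0 //.
by apply: functional_extensionality => m; apply: hr.
Qed.

Hypothesis q0 : q != 0.

Lemma act_ZZinv e l m :
  \sum_(y <- nth [::] (relations q P) 0) y.1 * dlmul y.2 e l m = 0.
Proof. by rewrite /= !big_cons big_nil /= subrK; ring. Qed.

Lemma act_ZinvZ e l m :
  \sum_(y <- nth [::] (relations q P) 1) y.1 * dlmul y.2 e l m = 0.
Proof. by rewrite /= !big_cons big_nil /= addrK; ring. Qed.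

Lemma actP_shift c k l m : actP c (fun j => l (j + k)) m = actP c l (m + k).
Proof. by apply: eq_bigr => i _; rewrite addrAC. Qed.

Lemma act_ZuZinv e l m :
  \sum_(y <- nth [::] (relations q P) 2) y.1 * dlmul y.2 e l m = 0.
Proof.
rewrite /= !big_cons big_nil /= !deg4_cons deg4_nil /= !addr0 !add0r.
rewrite actP_shift subrK.
have -> : q ^ (-2 * (m - 1)) = q ^+ 2 * q ^ (-2 * m).
  by rewrite exprnP -expfzDr //; congr (_ ^ _); ring.
ring.
Qed.

Lemma act_ZvZinv e l m :
  \sum_(y <- nth [::] (relations q P) 3) y.1 * dlmul y.2 e l m = 0.
Proof.
rewrite /= !big_cons big_nil /= !deg4_cons deg4_nil /= !addr0 !add0r.
rewrite actP_shift subrK.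
have -> : q ^ (2 * (m - 1)) = q ^- 2 * q ^ (2 * m).
  by rewrite exprnN -expfzDr //; congr (_ ^ _); ring.
ring.
Qed.

Lemma act_Pscaled c e l m :
  \sum_(y <- [seq (- x.1, x.2) | x <- Pscaled P c]) y.1 * dlmul y.2 e l m =
  - actP c l m.
Proof.
rewrite /Pscaled !big_map /actP -sumrN.
by apply: eq_bigr => i _ /=; rewrite dlmul_Zn mulNr.
Qed.

Lemma act_uv e l m :
  \sum_(y <- nth [::] (relations q P) 4) y.1 * dlmul y.2 e l m = 0.
Proof.
rewrite /= big_cons act_Pscaled /= !deg4_cons deg4_nil /= !addr0 !add0r.
case: ifP => he.
  rewrite (_ : (-1 + e < 0) = false); last by lia.
  rewrite /actP mulr_sumr mul1r -sumrB big1 // => i _.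
  have E : q ^ (2 * m) * (q ^ i%:Z * q ^ (-2 * (m + i%:Z))) = q ^ (- i%:Z).
    by rewrite -!expfzDr //; congr (_ ^ _); ring.
  by rewrite exprnP exprVn exprnN -E; ring.
rewrite (_ : (-1 + e < 0) = true); last by move/negbT: he; lia.
rewrite mulrA -expfzDr // (_ : 2 * m + -2 * m = 0) ?expr0z; ring.
Qed.

Lemma act_vu e l m :
  \sum_(y <- nth [::] (relations q P) 5) y.1 * dlmul y.2 e l m = 0.
Proof.
rewrite /= big_cons act_Pscaled /= !deg4_cons deg4_nil /= !addr0 !add0r.
case: ifP => he.
  rewrite (_ : (0 < 1 + e) = false); last by lia.
  rewrite /actP mulr_sumr mul1r -sumrB big1 // => i _.
  have E : q ^ (-2 * m) * (q ^ (- i%:Z) * q ^ (2 * (m + i%:Z))) = q ^ i%:Z.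
    by rewrite -!expfzDr //; congr (_ ^ _); ring.
  by rewrite exprVn exprnN exprnP -E; ring.
rewrite (_ : (0 < 1 + e) = true); last by move/negbT: he; lia.
rewrite mulrA -expfzDr // (_ : -2 * m + 2 * m = 0) ?expr0z; ring.
Qed.

Lemma relations_homogeneous j : exists D,
  forall y, y \in nth [::] (relations q P) j -> deg4 y.2 = D.
Proof.
have degZn i : deg4 (embw (nseq i gZ)) = 0.
  by elim: i => [|i IH]; rewrite /= ?deg4_nil ?deg4_cons ?IH.
case: j => [|[|[|[|[|[|j]]]]]] /=; last by exists 0; rewrite nth_nil.
1,2: exists 0.
3: exists 1.
4: exists (-1).
1-4: by move=> y; rewrite !inE => /orP[]/eqP -> /=; rewrite ?deg4_cons ?deg4_nil /=; lia.
all: exists 0 => y; rewrite in_cons => /orP[/eqP -> /=|].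
- by rewrite !deg4_cons deg4_nil /=; lia.
- by rewrite /Pscaled -map_comp => /mapP[i _ ->]; apply: degZn.
- by rewrite !deg4_cons deg4_nil /=; lia.
- by rewrite /Pscaled -map_comp => /mapP[i _ ->]; apply: degZn.
Qed.

Lemma trace_form_relations tau j a b :
  \sum_(y <- nth [::] (relations q P) j) y.1 * trace_form tau (a ++ y.2 ++ b) = 0.
Proof.
have [D hD] := relations_homogeneous j; apply: (trace_form_rel _ _ _ hD).
case: j {hD} => [|[|[|[|[|[|j]]]]]] e l m; last by rewrite /= nth_nil big_nil.
- exact: act_ZZinv.
- exact: act_ZinvZ.
- exact: act_ZuZinv.
- exact: act_ZvZinv.
- exact: act_uv.
- exact: act_vu.
Qed.

End DualLeftAction.

Section TauTrace.
Variables (q : CC) (P : {poly CC}).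
Hypothesis q0 : q != 0.

Definition tau_trace (tau : int -> CC) (w : word3) : CC :=
  trace_form q P tau (embw w).

Lemma embw_pmap (w : word4) : None \notin w -> embw (pmap id w) = w.
Proof.
elim: w => [|[g|] w IH] //=; rewrite inE negb_or => /andP[_ h].
by rewrite IH.
Qed.

Lemma Tbar_tau_trace tau w :
  Tbar (tau_trace tau) w = if None \in w then 0 else trace_form q P tau w.
Proof. by rewrite /Tbar /tau_trace; case: ifP => // /negbT /embw_pmap ->. Qed.

Lemma sum_coef4 (L : comb4) (h : word4 -> CC) :
  \sum_(x <- L) x.1 * h x.2 = \sum_(w <- undup (map snd L)) coef4 L w * h w.
Proof.
rewrite /coef4.
under [RHS]eq_bigr => w _ do rewrite big_mkcond /= mulr_suml.
rewrite exchange_big /= [RHS]big_seq [LHS]big_seq; apply: eq_bigr => x xL.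
have xU : x.2 \in undup (map snd L) by rewrite mem_undup; apply: map_f.
rewrite (bigD1_seq _ xU (undup_uniq _)) /= eqxx big1 ?addr0 //.
by move=> w /negbTE; rewrite eq_sym => ->; rewrite mul0r.
Qed.

(* The words with a letter [Z^-1] are exactly where [Tbar] and [trace_form]
   differ, and their total coefficient vanishes by hypothesis. *)
Lemma descends_tau_trace tau : descends q P (tau_trace tau).
Proof.
move=> s hs; set L := ideal_expand q P s.
have E x : x.1 * Tbar (tau_trace tau) x.2 = x.1 * trace_form q P tau x.2 -
    x.1 * (if None \in x.2 then trace_form q P tau x.2 else 0).
  by rewrite Tbar_tau_trace; case: ifP => _; ring.
rewrite (eq_bigr _ (fun x _ => E x)) sumrB.
have -> : \sum_(x <- L) x.1 * trace_form q P tau x.2 = 0.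
  rewrite /L /ideal_expand big_flatten big_map big1 // => x _.
  rewrite big_map /=; under eq_bigr => y _ do rewrite -mulrA.
  by rewrite -mulr_sumr trace_form_relations // mulr0.
rewrite (sum_coef4 L (fun w => if None \in w then trace_form q P tau w else 0)).
rewrite big1 ?subrr // => w _.
by case: ifP => h; [rewrite hs // mul0r | rewrite mulr0].
Qed.

Lemma dlmul_letter_shift g e l :
  dlmul_letter q P g e (fun j => l (j + 1)) =
  (fun j => q ^ (2 * ldeg g) * dlmul_letter q P g e l (j + 1)).
Proof.
apply: functional_extensionality => j.
case: g => [[]|] /=; rewrite ?mulr0 ?expr0z ?mul1r ?actP_shift //.
- by rewrite mulrA -expfzDr //; congr (q ^ _ * _); ring.
- by rewrite mulrA -expfzDr //; congr (q ^ _ * _); ring.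
- by rewrite addrAC.
Qed.

Lemma dlmul_shift w d l m :
  dlmul q P w d (fun j => l (j + 1)) m = q ^ (2 * deg4 w) * dlmul q P w d l (m + 1).
Proof.
elim: w l m => [|g w IH] l m /=; first by rewrite deg4_nil mulr0 expr0z mul1r.
rewrite dlmul_letter_shift dlmulZ IH deg4_cons mulrA -expfzDr //.
by congr (q ^ _ * _); ring.
Qed.

(* Words in u, v, Z never look at [l] below the argument they are evaluated
   at: their letters only shift arguments upwards. *)
Lemma dlmul_embw_local (w : word3) d (l1 l2 : int -> CC) m0 :
  (forall k, m0 <= k -> l1 k = l2 k) ->
  forall m, m0 <= m -> dlmul q P (embw w) d l1 m = dlmul q P (embw w) d l2 m.
Proof.
elim: w l1 l2 => [|g w IH] l1 l2 h m hm /=; first exact: h.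
apply: IH => // k hk.
have hs c : actP P c l1 k = actP P c l2 k.
  by apply: eq_bigr => i _; rewrite h //; lia.
case: g => /=; rewrite ?hs ?h //; lia.
Qed.

End TauTrace.

Ltac decide_ifs := repeat match goal with
  | |- context [ if ?c then _ else _ ] =>
      first [ rewrite (_ : c = true); last by lia
            | rewrite (_ : c = false); last by lia ]
  end.

Lemma addr0z (k : int) : k + 0%N = k.
Proof. exact: addr0. Qed.

Section RightMultiplication.
Variables (q : CC) (P : {poly CC}).
Hypotheses (q0 : q != 0) (sizeP : (0 < size P)%N).

Let regroup (p a b c d x : CC) : a * b = c * d -> p * a * (b * x) = p * c * (d * x).
Proof. by move=> E; rewrite -!mulrA (mulrA a) E -mulrA. Qed.

Let regroup' (p a b c d x : CC) : a * b = c * d -> p * a * (b * x) = c * (p * d * x).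
Proof. by move=> E; rewrite -mulrA (mulrA a) E; ring. Qed.

Lemma sum_iota_delta0 (F : nat -> CC) :
  \sum_(i <- iota 0 (size P)) (i == 0%N)%:R * F i = F 0%N.
Proof.
rewrite (_ : iota 0 (size P) = 0%N :: iota 1 (size P).-1); last first.
  by move: sizeP; case: (size P).
rewrite big_cons eqxx mul1r big1_seq ?addr0 //= => i.
by rewrite mem_iota => /andP[h1 _]; case: i h1 => // i _; rewrite mul0r.
Qed.

(* Right multiplication of normal forms by u and v:
   Z^m v^k u = sum_i P_i q^((2k-1)i) Z^(m+i) v^(k-1) for k > 0, and
   Z^m u^k v = sum_i P_i q^((1-2k)i) Z^(m+i) u^(k-1) for k > 0.  Since right
   multiplications commute with left ones, they intertwine [dlmul]. *)
Definition rmul_u_coef (d : int) (i : nat) : CC :=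
  if d < 0 then P`_i * q ^ ((-2 * d - 1) * i%:Z) else (i == 0%N)%:R.
Definition rmul_v_coef (d : int) (i : nat) : CC :=
  if 0 < d then P`_i * q ^ ((1 - 2 * d) * i%:Z) else (i == 0%N)%:R.

Lemma dlmul_rmul (c : int -> nat -> CC) (s : int) :
  (forall g e l j,
    \sum_(i <- iota 0 (size P)) c e i * dlmul_letter q P g (e + s) l (j + i%:Z) =
    \sum_(i <- iota 0 (size P))
       c (ldeg g + e) i * dlmul_letter q P g e (fun k => l (k + i%:Z)) j) ->
  forall w d l m,
    \sum_(i <- iota 0 (size P)) c d i * dlmul q P w (d + s) l (m + i%:Z) =
    \sum_(i <- iota 0 (size P))
       c (deg4 w + d) i * dlmul q P w d (fun k => l (k + i%:Z)) m.
Proof.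
move=> hletter w d; elim: w => [|g w IH] l m /=; first by rewrite deg4_nil add0r.
rewrite IH -[LHS](congr1 (fun f => f m) (dlmul_sum _ _ _ _ _ _ _)) /=.
rewrite -[RHS](congr1 (fun f => f m) (dlmul_sum _ _ _ _ _ _ _)) /=.
congr dlmul; apply: functional_extensionality => k.
by rewrite addrA hletter deg4_cons addrA.
Qed.

Lemma rmul_u_letter_u e l j :
  \sum_(i <- iota 0 (size P)) rmul_u_coef e i * dlmul_letter q P (Some gu) (e + 1) l (j + i%:Z) =
  \sum_(i <- iota 0 (size P))
     rmul_u_coef (1 + e) i * dlmul_letter q P (Some gu) e (fun k => l (k + i%:Z)) j.
Proof.
rewrite /rmul_u_coef /=; case: (ltrgtP e (-1)) => he; decide_ifs.
- apply: eq_bigr => i _; rewrite actP_shift.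
  by apply: regroup; rewrite -!expfzDr //; congr (_ ^ _); ring.
- by rewrite !sum_iota_delta0 // !addr0.
- rewrite sum_iota_delta0 //= /actP mulr_sumr; apply: eq_bigr => i _.
  rewrite addr0z exprVn exprnN; apply: regroup'.
  by rewrite -!expfzDr //; congr (_ ^ _); nia.
Qed.

Lemma rmul_u_letter_v e l j :
  \sum_(i <- iota 0 (size P)) rmul_u_coef e i * dlmul_letter q P (Some gv) (e + 1) l (j + i%:Z) =
  \sum_(i <- iota 0 (size P))
     rmul_u_coef (-1 + e) i * dlmul_letter q P (Some gv) e (fun k => l (k + i%:Z)) j.
Proof.
rewrite /rmul_u_coef /=; case: (ltrgtP e 0) => he; decide_ifs.
- apply: eq_bigr => i _.
  by apply: regroup; rewrite -!expfzDr //; congr (_ ^ _); ring.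
- by rewrite !sum_iota_delta0 // !addr0z actP_shift addr0z.
- rewrite sum_iota_delta0 //= !addr0z /actP mulr_sumr; apply: eq_bigr => i _.
  rewrite exprnP; symmetry; apply: regroup'.
  by rewrite -!expfzDr //; congr (_ ^ _); nia.
Qed.

Lemma rmul_u_letter g e l j :
  \sum_(i <- iota 0 (size P)) rmul_u_coef e i * dlmul_letter q P g (e + 1) l (j + i%:Z) =
  \sum_(i <- iota 0 (size P))
     rmul_u_coef (ldeg g + e) i * dlmul_letter q P g e (fun k => l (k + i%:Z)) j.
Proof.
case: g => [[]|]; [exact: rmul_u_letter_u | exact: rmul_u_letter_v | |];
by rewrite /= add0r; apply: eq_bigr => i _; rewrite addrAC.
Qed.

Lemma rmul_v_letter_u e l j :
  \sum_(i <- iota 0 (size P)) rmul_v_coef e i * dlmul_letter q P (Some gu) (e - 1) l (j + i%:Z) =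
  \sum_(i <- iota 0 (size P))
     rmul_v_coef (1 + e) i * dlmul_letter q P (Some gu) e (fun k => l (k + i%:Z)) j.
Proof.
rewrite /rmul_v_coef /=; case: (ltrgtP e 0) => he; decide_ifs.
- by rewrite !sum_iota_delta0 // ?addr0z ?actP_shift ?addr0z.
- apply: eq_bigr => i _.
  by apply: regroup; rewrite -!expfzDr //; congr (_ ^ _); ring.
- rewrite sum_iota_delta0 //= !addr0z /actP mulr_sumr; apply: eq_bigr => i _.
  rewrite exprVn exprnN; symmetry; apply: regroup'.
  by rewrite -!expfzDr //; congr (_ ^ _); nia.
Qed.

Lemma rmul_v_letter_v e l j :
  \sum_(i <- iota 0 (size P)) rmul_v_coef e i * dlmul_letter q P (Some gv) (e - 1) l (j + i%:Z) =
  \sum_(i <- iota 0 (size P))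
     rmul_v_coef (-1 + e) i * dlmul_letter q P (Some gv) e (fun k => l (k + i%:Z)) j.
Proof.
rewrite /rmul_v_coef /=; case: (ltrgtP e 1) => he; decide_ifs.
- by rewrite !sum_iota_delta0 // ?addr0z.
- apply: eq_bigr => i _; rewrite actP_shift.
  by apply: regroup; rewrite -!expfzDr //; congr (_ ^ _); ring.
- rewrite sum_iota_delta0 //= /actP mulr_sumr; apply: eq_bigr => i _.
  rewrite addr0z exprnP; apply: regroup'.
  by rewrite -!expfzDr //; congr (_ ^ _); nia.
Qed.

Lemma rmul_v_letter g e l j :
  \sum_(i <- iota 0 (size P)) rmul_v_coef e i * dlmul_letter q P g (e - 1) l (j + i%:Z) =
  \sum_(i <- iota 0 (size P))
     rmul_v_coef (ldeg g + e) i * dlmul_letter q P g e (fun k => l (k + i%:Z)) j.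
Proof.
case: g => [[]|]; [exact: rmul_v_letter_u | exact: rmul_v_letter_v | |];
by rewrite /= add0r; apply: eq_bigr => i _; rewrite addrAC.
Qed.

End RightMultiplication.

Section TwistedTrace.
Variables (q : CC) (P : {poly CC}) (t : CC) (tau : int -> CC).
Hypotheses (q0 : q != 0) (t0 : t != 0) (sizeP : (0 < size P)%N).

(* The twisted trace identity  T(u (v Z^m)) = t T((v Z^m) u),  read through
   uv = P(q^-1 Z) and v Z^m u = q^(2m) Z^m P(qZ). *)
Definition tau_recurrence : Prop :=
  forall m : int, 0 <= m -> q ^ (-2 * m) * actP P q^-1 tau m = t * actP P q tau m.

Hypothesis htau : tau_recurrence.

Let T := tau_trace q P tau.

Lemma tau_trace_Z (w : word3) : T (gZ :: w) = T (w ++ [:: gZ]).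
Proof.
rewrite /T /tau_trace /trace_form /embw map_cat -/(embw w) /=.
rewrite deg4_cons deg4_cat deg4_cons deg4_nil /= !add0r !addr0.
case: eqP => // hw; rewrite dlmul_cat /= deg4_cons deg4_nil /= dlmul_shift //.
by rewrite hw mulr0 expr0z mul1r add0r addr0.
Qed.

Lemma tau_trace_u (w : word3) : T (gu :: w) = t * T (w ++ [:: gu]).
Proof.
rewrite /T /tau_trace /trace_form /embw map_cat -/(embw w) /=.
rewrite deg4_cons deg4_cat deg4_cons deg4_nil /= !addr0 (addrC (deg4 _)).
case: eqP => hw; last by rewrite mulr0.
rewrite -/(embw w) in hw *; have {}hw : deg4 (embw w) = - 1 by lia.
rewrite dlmul_cat /= deg4_nil /= hw ltrN10 mulr0 expr0z mul1r.
rewrite deg4_cons deg4_nil /= !addr0.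
have := @dlmul_rmul q P (rmul_u_coef q P) 1 (rmul_u_letter q0 sizeP) (embw w) 0 tau 0.
rewrite hw addr0 {1}/rmul_u_coef ltxx sum_iota_delta0 // add0r => ->.
have -> : \sum_(i <- iota 0 (size P)) rmul_u_coef q P (-1) i *
    dlmul q P (embw w) 0 (fun k => tau (k + i%:Z)) 0 =
    dlmul q P (embw w) 0 (actP P q tau) 0.
  rewrite /actP dlmul_sum; apply: eq_bigr => i _.
  by rewrite /rmul_u_coef /= exprnP; congr (_ * q ^ _ * _); lia.
rewrite -[t * _](congr1 (fun f => f 0) (dlmulZ _ _ _ _ _ _)).
by apply: dlmul_embw_local => //= k hk; rewrite htau.
Qed.

Lemma tau_trace_v (w : word3) : T (gv :: w) = t^-1 * T (w ++ [:: gv]).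
Proof.
rewrite /T /tau_trace /trace_form /embw map_cat -/(embw w) /=.
rewrite deg4_cons deg4_cat deg4_cons deg4_nil /= !addr0 (addrC (deg4 _)).
case: eqP => hw; last by rewrite mulr0.
rewrite -/(embw w) in hw *; have {}hw : deg4 (embw w) = 1 by lia.
rewrite dlmul_cat /= deg4_nil /= hw ltr01 mulr0 expr0z mul1r.
rewrite deg4_cons deg4_nil /= !addr0.
have := @dlmul_rmul q P (rmul_v_coef q P) (-1) (rmul_v_letter q0 sizeP) (embw w) 0 tau 0.
rewrite hw addr0 {1}/rmul_v_coef ltxx sum_iota_delta0 // add0r => ->.
have -> : \sum_(i <- iota 0 (size P)) rmul_v_coef q P 1 i *
    dlmul q P (embw w) 0 (fun k => tau (k + i%:Z)) 0 =
    dlmul q P (embw w) 0 (actP P q^-1 tau) 0.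
  rewrite /actP dlmul_sum; apply: eq_bigr => i _.
  by rewrite /rmul_v_coef /= exprVn exprnN; congr (_ * q ^ _ * _); lia.
rewrite -[t^-1 * _](congr1 (fun f => f 0) (dlmulZ _ _ _ _ _ _)).
apply: dlmul_embw_local => //= k hk.
have E : actP P q^-1 tau k = q ^ (2 * k) * (t * actP P q tau k).
  by rewrite -htau // mulrA -expfzDr // (_ : 2 * k + -2 * k = 0) ?mul1r //; ring.
by rewrite E; field.
Qed.

Lemma tau_trace_rot (w1 w2 : word3) : T (w1 ++ w2) = t ^ wdeg w1 * T (w2 ++ w1).
Proof.
elim: w1 w2 => [|g w1 IH] w2; first by rewrite cats0 /wdeg /= subrr expr0z mul1r.
have letter w : T (g :: w) = t ^ ldeg (Some g) * T (w ++ [:: g]).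
  case: g => /=; rewrite ?expr1z ?exprN1 ?expr0z ?mul1r.
  - exact: tau_trace_u.
  - exact: tau_trace_v.
  - exact: tau_trace_Z.
by rewrite cat_cons letter -catA IH wdeg_cons mulrA -expfzDr // -catA.
Qed.

Lemma tau_trace_twisted : twisted_trace q P t T.
Proof.
split; first exact: descends_tau_trace.
move=> a b; rewrite /evalT /mulc /gtw !big_allpairs_dep.
under [RHS]eq_bigr => y _ do rewrite big_map.
rewrite [RHS]exchange_big /=; apply: eq_bigr => x _; apply: eq_bigr => y _ /=.
by rewrite tau_trace_rot; ring.
Qed.

End TwistedTrace.

Section LinearRecurrence.
Variables (a : nat -> nat -> CC) (n : nat).

Definition recurrence (s : nat -> CC) (m : nat) : Prop :=
  \sum_(i <- iota 0 n.+1) a m i * s (m + i)%N = 0.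

Lemma recurrence_eq (s1 s2 : nat -> CC) :
  (forall m, a m n != 0) -> (forall m, recurrence s1 m) -> (forall m, recurrence s2 m) ->
  (forall i, (i < n)%N -> s1 i = s2 i) -> forall k, s1 k = s2 k.
Proof.
move=> ha r1 r2 hlow; elim/ltn_ind => k IH.
case: (ltnP k n) => hk; first exact: hlow.
rewrite -(subnK hk); set m := (k - n)%N.
have split_last s : recurrence s m ->
    a m n * s (m + n)%N = - \sum_(i <- iota 0 n) a m i * s (m + i)%N.
  by rewrite /recurrence -addn1 iotaD big_cat /= big_seq1 add0n addrC => /eqP;
     rewrite addr_eq0 => /eqP.
have low : \sum_(i <- iota 0 n) a m i * s1 (m + i)%N =
           \sum_(i <- iota 0 n) a m i * s2 (m + i)%N.
  rewrite big_seq [RHS]big_seq; apply: eq_bigr => i; rewrite mem_iota => hi.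
  by rewrite IH // /m; lia.
apply: (mulfI (ha m)); rewrite split_last // split_last //.
by rewrite low.
Qed.

Variable init : nat -> CC.

Definition rec_next (k : nat) (s : seq CC) : CC :=
  if (k < n)%N then init k
  else - (\sum_(i <- iota 0 n) a (k - n) i * nth 0 s (k - n + i)) / a (k - n) n.

Fixpoint rec_prefix (k : nat) : seq CC :=
  if k is k'.+1 then rcons (rec_prefix k') (rec_next k' (rec_prefix k')) else [::].

Definition rec_sol (k : nat) : CC := nth 0 (rec_prefix k.+1) k.

Lemma size_rec_prefix k : size (rec_prefix k) = k.
Proof. by elim: k => //= k IH; rewrite size_rcons IH. Qed.

Lemma rec_solE k : rec_sol k = rec_next k (rec_prefix k).
Proof. by rewrite /rec_sol /= nth_rcons size_rec_prefix ltnn eqxx. Qed.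

Lemma nth_rec_prefix k j : (j < k)%N -> nth 0 (rec_prefix k) j = rec_sol j.
Proof.
elim: k => // k IH; rewrite ltnS leq_eqVlt => /orP[/eqP -> //|h].
by rewrite /= nth_rcons size_rec_prefix h IH.
Qed.

Lemma rec_sol_init k : (k < n)%N -> rec_sol k = init k.
Proof. by move=> hk; rewrite rec_solE /rec_next hk. Qed.

Lemma rec_sol_recurrence m : a m n != 0 -> recurrence rec_sol m.
Proof.
move=> hn; rewrite /recurrence -addn1 iotaD big_cat /= big_seq1 add0n.
rewrite rec_solE /rec_next ltnNge leq_addl /= addnK.
have -> : \sum_(i <- iota 0 n) a m i * nth 0 (rec_prefix (m + n)) (m + i) =
          \sum_(i <- iota 0 n) a m i * rec_sol (m + i).
  rewrite big_seq [RHS]big_seq; apply: eq_bigr => i; rewrite mem_iota => hi.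
  by rewrite nth_rec_prefix //; lia.
by field.
Qed.

End LinearRecurrence.

Definition rec_coef (q t : CC) (P : {poly CC}) (m i : nat) : CC :=
  P`_i * (q ^ (-2 * m%:Z) * q^-1 ^+ i - t * q ^+ i).

Lemma rec_coef_lead_neq0 q t (P : {poly CC}) n :
  q != 0 -> size P = n.+1 -> (forall k : nat, t != q ^- (2 * k)) ->
  forall m, rec_coef q t P m n != 0.
Proof.
move=> q0 hP ht m; rewrite /rec_coef mulf_neq0 //.
  by rewrite -[n]/(n.+1.-1) -hP -lead_coefE lead_coef_eq0 -size_poly_eq0 hP.
rewrite subr_eq0; apply: contra (ht (m + n)%N) => /eqP H; apply/eqP.
rewrite exprVn !exprnN exprnP in H.
have -> : t = t * q ^ n%:Z * q ^ (- n%:Z) by rewrite -mulrA -expfzDr // subrr mulr1.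
by rewrite -H exprnN -!expfzDr //; congr (_ ^ _); lia.
Qed.

Definition ext0 (s : nat -> CC) (z : int) : CC := if z is Posz k then s k else 0.

Lemma tau_recurrence_ext0 q t (P : {poly CC}) n (s : nat -> CC) : size P = n.+1 ->
  (forall m, recurrence (rec_coef q t P) n s m) -> tau_recurrence q P t (ext0 s).
Proof.
move=> hP hs [m|//] _; apply/eqP; rewrite -subr_eq0 !mulr_sumr -sumrB hP.
apply/eqP; rewrite -[RHS](hs m); apply: eq_bigr => i _.
by rewrite /rec_coef -PoszD /=; ring.
Qed.

Lemma tau_trace_Zn q (P : {poly CC}) (s : nat -> CC) i :
  tau_trace q P (ext0 s) (nseq i gZ) = s i.
Proof.
rewrite /tau_trace /trace_form deg4_embw.
have -> : wdeg (nseq i gZ) = 0 by rewrite /wdeg; elim: i.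
by rewrite eqxx dlmul_Zn add0r.
Qed.

Section TraceRelations.
Variables (q : CC) (P : {poly CC}) (T : word3 -> CC).
Hypothesis hT : descends q P T.

Lemma None_notin_embw (w : word3) : None \notin embw w.
Proof. by elim: w => //= g w IH; rewrite inE negb_or IH. Qed.

Lemma Tbar_embw (w : word3) : Tbar T (embw w) = T w.
Proof.
rewrite /Tbar (negbTE (None_notin_embw w)); congr T.
by elim: w => //= g w ->.
Qed.

Lemma descends_embw s : (forall x, x \in ideal_expand q P s -> None \notin x.2) ->
  \sum_(x <- ideal_expand q P s) x.1 * Tbar T x.2 = 0.
Proof.
move=> hN; apply: hT => w hw; rewrite /coef4 big_seq_cond big1 // => x.
by case/andP=> /hN xN /eqP ex; move: xN; rewrite ex hw.
Qed.

Lemma embw_cat3 (x y z : word3) : embw x ++ embw y ++ embw z = embw (x ++ y ++ z).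
Proof. by rewrite /embw !map_cat. Qed.

Lemma descends_rel_poly j (r : word3) c (a b : word3) :
  nth [::] (relations q P) j = (1, embw r) :: [seq (- x.1, x.2) | x <- Pscaled P c] ->
  T (a ++ r ++ b) = \sum_(i <- iota 0 (size P)) P`_i * c ^+ i * T (a ++ nseq i gZ ++ b).
Proof.
move=> hj.
have hN x : x \in ideal_expand q P [:: (1, (embw a, j, embw b))] -> None \notin x.2.
  rewrite /ideal_expand /= cats0 hj inE => /orP[/eqP -> /=|].
    by rewrite embw_cat3 None_notin_embw.
  by case/mapP=> y /mapP[z /mapP[i _ ->] ->] -> /=; rewrite embw_cat3 None_notin_embw.
move: (descends_embw hN).
rewrite /ideal_expand /= cats0 hj big_cons !big_map /= embw_cat3 Tbar_embw.
under eq_bigr => i _ do rewrite embw_cat3 Tbar_embw mul1r mulNr.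
by rewrite !mul1r sumrN => /eqP; rewrite subr_eq0 => /eqP.
Qed.

Lemma descends_rel_conj j (x : gen) c (a b : word3) :
  nth [::] (relations q P) j = [:: (1, [:: Some gZ; Some x; None]); (- c, [:: Some x])] ->
  T (a ++ gZ :: x :: b) = c * T (a ++ x :: gZ :: b).
Proof.
move=> hj.
(* a (Z x Z^-1 - c x) Z b - a Z x (Z^-1 Z - 1) b  =  a Z x b - c a x Z b *)
pose s : seq (CC * (word4 * nat * word4)) := [:: (1, (embw a, j, Some gZ :: embw b));
            (-1, (embw a ++ [:: Some gZ; Some x], 1%N, embw b))].
have E1 : embw a ++ [:: Some x, Some gZ & embw b] = embw (a ++ x :: gZ :: b).
  by rewrite /embw map_cat.
have E2 : embw a ++ [:: Some gZ, Some x & embw b] = embw (a ++ gZ :: x :: b).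
  by rewrite /embw map_cat.
set W := embw a ++ [:: Some gZ, Some x, None, Some gZ & embw b].
have hW : None \in W by rewrite mem_cat !inE orbT.
have expand : ideal_expand q P s =
    [:: (1, W); (- c, embw (a ++ x :: gZ :: b)); (-1, W); (1, embw (a ++ gZ :: x :: b))].
  by rewrite /ideal_expand /= hj /= -!catA /= E1 E2 !mul1r mulN1r mulrN1 opprK.
have hcoef w : None \in w -> coef4 (ideal_expand q P s) w = 0.
  move=> hw; rewrite expand /coef4 !big_cons big_nil /=.
  have nf (y : word3) : (embw y == w) = false.
    by apply/negbTE/eqP => ew; move: hw; rewrite -ew (negbTE (None_notin_embw y)).
  by rewrite !nf; case: (W == w); ring.
move: (@hT s hcoef); rewrite expand !big_cons big_nil /= !Tbar_embw /Tbar hW => H.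
by apply/eqP; rewrite -subr_eq0; apply/eqP; rewrite -[RHS]H; ring.
Qed.

End TraceRelations.

Lemma mulr_fixed_eq0 (c x : CC) : c != 1 -> x = c * x -> x = 0.
Proof.
move=> c1 h; apply/eqP; have : (1 - c) * x == 0 by rewrite mulrBl mul1r -h subrr.
by rewrite mulf_eq0 subr_eq0 eq_sym (negbTE c1).
Qed.

Lemma expfz_neq1 (q : CC) (z : int) : `|q| < 1 -> z != 0 -> q ^ z != 1.
Proof.
have expn_neq1 k : `|q| < 1 -> (k != 0)%N -> q ^+ k != 1.
  move=> q1 k0; apply/eqP => h.
  have : `|q ^+ k| < 1 by rewrite normrX exprn_ilt1.
  by rewrite h normr1 ltxx.
move=> q1; case: z => [k|k] hz; first by apply: expn_neq1; move: hz; rewrite eqz_nat.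
by rewrite NegzE -exprnN invr_eq1; apply: expn_neq1.
Qed.

Lemma wdeg_nseq (x : gen) k : wdeg (nseq k x) = k%:Z * ldeg (Some x).
Proof.
elim: k => [|k IH]; first by rewrite /wdeg /= subrr mul0r.
by rewrite /= wdeg_cons IH intS; ring.
Qed.

Section TwistedTraceRelations.
Variables (q : CC) (P : {poly CC}) (t : CC) (T : word3 -> CC).
Hypotheses (q0 : q != 0) (hT : twisted_trace q P t T).

Lemma twisted_trace_rot (w1 w2 : word3) : T (w1 ++ w2) = t ^ wdeg w1 * T (w2 ++ w1).
Proof.
have := hT.2 [:: (1, w1)] [:: (1, w2)].
by rewrite /evalT /mulc /gtw /= !big_cons !big_nil /= !mul1r !addr0.
Qed.

Lemma trace_uv (a b : word3) :
  T (a ++ gu :: gv :: b) =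
  \sum_(i <- iota 0 (size P)) P`_i * q^-1 ^+ i * T (a ++ nseq i gZ ++ b).
Proof. exact: (@descends_rel_poly q P T hT.1 4 [:: gu; gv]). Qed.

Lemma trace_vu (a b : word3) :
  T (a ++ gv :: gu :: b) =
  \sum_(i <- iota 0 (size P)) P`_i * q ^+ i * T (a ++ nseq i gZ ++ b).
Proof. exact: (@descends_rel_poly q P T hT.1 5 [:: gv; gu]). Qed.

Lemma trace_Z_pass (a r b : word3) :
  T (a ++ gZ :: r ++ b) = q ^ (2 * wdeg r) * T (a ++ r ++ gZ :: b).
Proof.
elim: r a => [|g r IH] a /=; first by rewrite /wdeg /= subrr mulr0 expr0z mul1r.
have swap : T (a ++ gZ :: g :: r ++ b) =
            q ^ (2 * ldeg (Some g)) * T (a ++ g :: gZ :: r ++ b).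
  case: g => /=.
  - by rewrite (@descends_rel_conj q P T hT.1 2 gu (q ^+ 2)).
  - by rewrite (@descends_rel_conj q P T hT.1 3 gv (q ^- 2)) // exprnN.
  - by rewrite mulr0 expr0z mul1r.
rewrite swap -cat1s catA IH -catA wdeg_cons mulrA -expfzDr //.
by congr (q ^ _ * _); ring.
Qed.

Lemma trace_Zn_pass (m : nat) (a r b : word3) :
  T (a ++ nseq m gZ ++ r ++ b) = q ^ (2 * m%:Z * wdeg r) * T (a ++ r ++ nseq m gZ ++ b).
Proof.
elim: m a => [|m IH] a /=; first by rewrite mulr0 mul0r expr0z mul1r.
rewrite -cat1s catA IH -catA /= trace_Z_pass mulrA -expfzDr //.
by congr (q ^ _ * _); rewrite intS; ring.
Qed.

(* T(u v Z^m) = t T(v Z^m u), with both sides rewritten by uv = P(q^-1 Z),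
   vu = P(qZ) and by moving Z^m through v. *)
Lemma trace_Zn_recurrence n : size P = n.+1 ->
  forall m, recurrence (rec_coef q t P) n (fun k => T (nseq k gZ)) m.
Proof.
move=> hP m; rewrite /recurrence -hP.
have := twisted_trace_rot [:: gu] (gv :: nseq m gZ).
rewrite /= (trace_uv [::] (nseq m gZ)).
rewrite (trace_Zn_pass m [:: gv] [:: gu] [::]) /= cats0 (trace_vu [::] (nseq m gZ)).
rewrite /wdeg /= expr1z => h.
have -> : \sum_(i <- iota 0 (size P)) rec_coef q t P m i * T (nseq (m + i) gZ) =
  q ^ (-2 * m%:Z) * (\sum_(i <- iota 0 (size P)) P`_i * q^-1 ^+ i * T (nseq i gZ ++ nseq m gZ))
  - t * (\sum_(i <- iota 0 (size P)) P`_i * q ^+ i * T (nseq i gZ ++ nseq m gZ)).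
  rewrite !mulr_sumr -sumrB; apply: eq_bigr => i _.
  by rewrite -nseqD addnC /rec_coef; ring.
rewrite h mulrCA (mulrA (q ^ _)) -expfzDr // (_ : -2 * m%:Z + _ = 0); last by lia.
by rewrite expr0z mul1r subrr.
Qed.

Hypotheses (q1 : `|q| < 1) (t1 : t != 1).

Lemma trace_pow_Zn_eq0 (x : gen) (k m : nat) : x != gZ -> (0 < k)%N ->
  T (nseq k x ++ nseq m gZ) = 0.
Proof.
move=> xZ k0; case: m => [|m].
  rewrite cats0; case: k k0 => // k _.
  have h := twisted_trace_rot [:: x] (nseq k x).
  rewrite -[_ ++ [:: x]]/(nseq k x ++ nseq 1 x) -nseqD addn1 in h.
  apply: (mulr_fixed_eq0 _ h).
  rewrite wdeg_cons /wdeg /= subrr addr0.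
  by case: x xZ {h} => //= _; rewrite ?expr1z ?exprN1 ?invr_eq1.
have h := twisted_trace_rot (nseq m.+1 gZ) (nseq k x).
have hpass := trace_Zn_pass m.+1 [::] (nseq k x) [::].
rewrite /= !cats0 in hpass.
rewrite wdeg_nseq /= mulr0 expr0z mul1r hpass in h.
apply: (mulr_fixed_eq0 _ (esym h)).
rewrite wdeg_nseq; apply: expfz_neq1 => //.
rewrite !mulf_neq0 // ?eqz_nat -?lt0n //.
by case: x xZ {h hpass}.
Qed.

End TwistedTraceRelations.

Definition Zfree (w : word3) : word3 := [seq g <- w | g != gZ].

Fixpoint Zpass_coef (q : CC) (w : word3) : CC :=
  match w with
  | [::] => 1
  | gZ :: w' => q ^ (2 * wdeg w') * Zpass_coef q w'
  | _ :: w' => Zpass_coef q w'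
  end.

Lemma Zfree_cat (x y : word3) : Zfree (x ++ y) = Zfree x ++ Zfree y.
Proof. exact: filter_cat. Qed.

Lemma Zfree_nseq k : Zfree (nseq k gZ) = [::].
Proof. by elim: k. Qed.

Lemma size_Zfree x : (size (Zfree x) <= size x)%N.
Proof. by rewrite size_filter count_size. Qed.

Lemma Zfree_word_cases (s : word3) : all (fun g => g != gZ) s ->
  [\/ exists s1 s2, s = s1 ++ gu :: gv :: s2,
      exists s1 s2, s = s1 ++ gv :: gu :: s2 |
      exists2 x, x != gZ & s = nseq (size s) x].
Proof.
elim: s => [|x s IH] /=; first by move=> _; apply: Or33; exists gu.
case/andP=> xZ /IH [[s1 [s2 ->]]|[s1 [s2 ->]]|[y yZ hy]].
- by apply: Or31; exists (x :: s1), s2.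
- by apply: Or32; exists (x :: s1), s2.
case: s hy {IH} => [|z s] hy; first by apply: Or33; exists x.
case: hy => ez hs; have [exy|nxy] := eqVneq x y.
  by apply: Or33; exists x; rewrite // exy ez /= -hs.
move: ez hs xZ yZ nxy; case: x; case: y => //= -> _ _ _ _.
- by apply: Or31; exists [::], s.
- by apply: Or32; exists [::], s.
Qed.

Section TwistedTraceUniqueness.
Variables (q : CC) (P : {poly CC}) (t : CC).
Hypotheses (q0 : q != 0) (q1 : `|q| < 1) (t1 : t != 1).

Lemma trace_Z_to_end (T : word3 -> CC) (w a : word3) j : twisted_trace q P t T ->
  T (a ++ w ++ nseq j gZ) = Zpass_coef q w * T (a ++ Zfree w ++ nseq (count_mem gZ w + j) gZ).
Proof.
move=> hT; elim: w a j => [|g w IH] a j /=; first by rewrite mul1r.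
case: g => /=; rewrite ?add0n.
- by rewrite -cat1s catA IH -catA.
- by rewrite -cat1s catA IH -catA.
- by rewrite (trace_Z_pass q0 hT) -[gZ :: nseq j gZ]/(nseq j.+1 gZ) IH mulrA addnS.
Qed.

(* Induction on the number of letters u, v: after moving every Z to the right,
   an adjacent pair uv or vu is replaced by a polynomial in Z, and a pure
   power u^k Z^m or v^k Z^m (k > 0) has trace 0. *)
Lemma twisted_traces_eq (T1 T2 : word3 -> CC) :
  twisted_trace q P t T1 -> twisted_trace q P t T2 ->
  (forall k, T1 (nseq k gZ) = T2 (nseq k gZ)) -> T1 =1 T2.
Proof.
move=> h1 h2 hZ w.
elim: {w}(size (Zfree w)).+1 {-2}w (ltnSn (size (Zfree w))) => // N IH w hw.
have := trace_Z_to_end w [::] 0 h1; have := trace_Z_to_end w [::] 0 h2.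
rewrite /= !cats0 => -> ->; congr (_ * _).
have : all (fun g => g != gZ) (Zfree w) by apply: filter_all.
move: hw (count_mem gZ w + 0)%N; set s := Zfree w => hw j.
case/Zfree_word_cases => [[s1 [s2 es]]|[s1 [s2 es]]|[x xZ es]].
- rewrite es -catA /= (trace_uv h1) (trace_uv h2).
  apply: eq_bigr => i _; congr (_ * _); apply: IH.
  rewrite !Zfree_cat !Zfree_nseq /= cats0 size_cat.
  by have := size_Zfree s1; have := size_Zfree s2; move: hw; rewrite es size_cat /=; lia.
- rewrite es -catA /= (trace_vu h1) (trace_vu h2).
  apply: eq_bigr => i _; congr (_ * _); apply: IH.
  rewrite !Zfree_cat !Zfree_nseq /= cats0 size_cat.
  by have := size_Zfree s1; have := size_Zfree s2; move: hw; rewrite es size_cat /=; lia.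
- move: es; case: (size s) => [|k] ->; first by rewrite /= hZ.
  by rewrite (trace_pow_Zn_eq0 q0 h1) ?(trace_pow_Zn_eq0 q0 h2).
Qed.

End TwistedTraceUniqueness.

Theorem proposition5p5 (q : CC) (P : {poly CC}) (n : nat) (t : CC)
  (hq0 : 0 < `|q|) (hq1 : `|q| < 1)
  (hP : size P = n.+1) (hn : (1 <= n)%N)
  (ht0 : t != 0) (ht : forall k : nat, t != q ^- (2 * k)) :
  (forall c : 'I_n -> CC, exists T : word3 -> CC,
      twisted_trace q P t T /\ forall i : 'I_n, T (nseq i gZ) = c i) /\
  (forall T1 T2 : word3 -> CC, twisted_trace q P t T1 -> twisted_trace q P t T2 ->
      (forall i : 'I_n, T1 (nseq i gZ) = T2 (nseq i gZ)) -> T1 =1 T2).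
Proof.
have q0 : q != 0 by rewrite -normr_gt0.
have t1 : t != 1 by have := ht 0%N; rewrite muln0 expr0 invr1.
have sizeP : (0 < size P)%N by rewrite hP.
have lead := rec_coef_lead_neq0 q0 hP ht.
split=> [c | T1 T2 h1 h2 hlow].
  pose init k := if insub k is Some i then c i else 0.
  pose s := rec_sol (rec_coef q t P) n init.
  exists (tau_trace q P (ext0 s)); split.
    apply: tau_trace_twisted => //; apply: tau_recurrence_ext0 hP _ => m.
    exact: rec_sol_recurrence.
  by move=> i; rewrite tau_trace_Zn /s rec_sol_init // /init valK.
apply: (twisted_traces_eq q0 hq1 t1 h1 h2).
apply: (recurrence_eq lead); try exact: (trace_Zn_recurrence q0 _ hP).
by move=> i hi; apply: (hlow (Ordinal hi)).
Qed.
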